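(* Let $A$ be a vertex of a cube $\mathcal C$ and let $S$ be the union of the three faces of $\mathcal C$ not containing $A$. If $f\colon\mathcal C\to\mathbb{R}$ is convex, then $$\operatorname{Avg}(f,\mathcal C)\le\frac14f(A)+\frac34\operatorname{Avg}(f,S),\qquad \operatorname{Avg}(f,h_A^{3/4}(S))\le\operatorname{Avg}(f,\mathcal C).$$
   Context: $\operatorname{Avg}(f,\mathcal C)$ is the average over the cube with respect to volume; averages over $S$ and $h_A^{3/4}(S)$ are with respect to surface area. $h_A^\lambda(\mathbf x)=A+\lambda(\mathbf x-A)$ is the homothety with center $A$ and ratio $\lambda$. *)

From Stdlib Require Import Reals.
From Coquelicot Require Import Coquelicot.
Open Scope R_scope.

Record pt3 := P3 { px : R ; py : R ; pz : R }.

Definition padd (x y : pt3) : pt3 := P3 (px x + px y) (py x + py y) (pz x + pz y).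
Definition psub (x y : pt3) : pt3 := P3 (px x - px y) (py x - py y) (pz x - pz y).
Definition pscal (c : R) (x : pt3) : pt3 := P3 (c * px x) (c * py x) (c * pz x).
Definition pdot (x y : pt3) : R := px x * px y + py x * py y + pz x * pz y.

Definition orthonormal (u v w : pt3) : Prop :=
  pdot u u = 1 /\ pdot v v = 1 /\ pdot w w = 1 /\
  pdot u v = 0 /\ pdot u w = 0 /\ pdot v w = 0.

(* The cube with vertex A, side a > 0 and edge directions u, v, w (orthonormal):
   C = { A + a s u + a t v + a r w : s, t, r in [0,1] }.
   Every cube in R^3, with any chosen vertex A, is of this form. *)
Definition cube_pt (A : pt3) (a : R) (u v w : pt3) (s t r : R) : pt3 :=
  padd A (padd (pscal (a * s) u) (padd (pscal (a * t) v) (pscal (a * r) w))).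

Definition in_cube (A : pt3) (a : R) (u v w : pt3) (x : pt3) : Prop :=
  exists s t r, 0 <= s <= 1 /\ 0 <= t <= 1 /\ 0 <= r <= 1 /\ x = cube_pt A a u v w s t r.

Definition convex_on_cube (A : pt3) (a : R) (u v w : pt3) (f : pt3 -> R) : Prop :=
  forall x y l, in_cube A a u v w x -> in_cube A a u v w y -> 0 <= l <= 1 ->
    f (padd (pscal l x) (pscal (1 - l) y)) <= l * f x + (1 - l) * f y.

Definition homothety (A : pt3) (lam : R) (x : pt3) : pt3 :=
  padd A (pscal lam (psub x A)).

(* Volume average over the cube: (1/vol C) * \int_C f, written through the
   affine parametrization [0,1]^3 -> C (constant Jacobian a^3 = vol C). *)
Definition avg_cube (A : pt3) (a : R) (u v w : pt3) (f : pt3 -> R) : R :=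
  RInt (fun s => RInt (fun t => RInt (fun r => f (cube_pt A a u v w s t r)) 0 1) 0 1) 0 1.

(* Surface average over S, the union of the three faces not containing A
   (faces s = 1, t = 1, r = 1), each of area a^2, pairwise overlapping only in
   edges (area 0): Avg(g,S) = (1/3) * sum of the three face averages. *)
Definition avg_S (A : pt3) (a : R) (u v w : pt3) (g : pt3 -> R) : R :=
  / 3 * ( RInt (fun t => RInt (fun r => g (cube_pt A a u v w 1 t r)) 0 1) 0 1
        + RInt (fun s => RInt (fun r => g (cube_pt A a u v w s 1 r)) 0 1) 0 1
        + RInt (fun s => RInt (fun t => g (cube_pt A a u v w s t 1)) 0 1) 0 1 ).

(* Surface average over h_A^lambda(S): h_A^lambda scales surface area by the
   constant factor lambda^2, so Avg(f, h_A^lambda(S)) = Avg(f o h_A^lambda, S). *)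
Definition avg_hS (A : pt3) (a : R) (u v w : pt3) (lam : R) (f : pt3 -> R) : R :=
  avg_S A a u v w (fun x => f (homothety A lam x)).

From Stdlib Require Import Reals Lra Lia Classical FunctionalExtensionality.
From Coquelicot Require Import Coquelicot.
Open Scope R_scope.

(* In the coordinates of the cube, with A at the origin, let I(l) be the integral
   of f over [0,l]^3 and S(l) the average of f over the three faces of [0,l]^3
   opposite A, rescaled to unit squares.  Peeling off a thin shell shows that I
   has left derivative 3 l^2 S(l), with an O(h^2) error locally uniformly in
   (0,1) because convex functions are locally Lipschitz; comparing I with a
   polynomial primitive then gives I(1) = int_0^1 3 l^2 S(l) dl in the form of
   two inequalities.  Along rays from A, f is convex, so S is convex with
   S(0) = f(A) and S(1) = Avg(f,S).  The chord bound S(l) <= (1-l) f(A) + l S(1)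
   integrates to the first inequality, and a supporting line of S at 3/4, the
   mean of the weight 3 l^2, integrates to Jensen's inequality
   S(3/4) <= I(1) = Avg(f,C). *)

(** * Convex functions on [0, 1] *)

Definition convex1 (phi : R -> R) : Prop :=
  forall x y l, 0 <= x <= 1 -> 0 <= y <= 1 -> 0 <= l <= 1 ->
    phi (l * x + (1 - l) * y) <= l * phi x + (1 - l) * phi y.

Definition slope (phi : R -> R) (x y : R) : R := (phi y - phi x) / (y - x).

Lemma Rdiv_le_cross a b p q : 0 < p -> 0 < q -> a * q <= b * p -> a / p <= b / q.
Proof.
  intros Hp Hq H. apply Rmult_le_reg_r with (p * q); [nra|].
  replace (a / p * (p * q)) with (a * q) by (field; lra).
  replace (b / q * (p * q)) with (b * p) by (field; lra). exact H.
Qed.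

Lemma nondecreasing_right_limit (m : R -> R) c B : 0 < c ->
  (forall x y, 0 < x -> x <= y -> y < c -> m x <= m y) ->
  (forall x, 0 < x < c -> B <= m x) ->
  exists L, forall eps, 0 < eps -> exists del, 0 < del /\
    forall x, 0 < x < del -> Rabs (m x - L) < eps.
Proof.
  intros Hc Hmono HB.
  set (E := fun v => exists x, 0 < x < c /\ v = - m x).
  assert (bE : bound E) by (exists (- B); intros v [x [Hx ->]]; pose proof (HB x Hx); lra).
  assert (nE : exists v, E v) by (exists (- m (c / 2)), (c / 2); split; [lra|reflexivity]).
  destruct (completeness E bE nE) as [g [Hub Hlub]].
  exists (- g). intros eps Heps.
  assert (Hinf : forall x, 0 < x < c -> - g <= m x).
  { intros x Hx. assert (E (- m x)) by (exists x; split; [exact Hx|reflexivity]).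
    pose proof (Hub _ H). lra. }
  destruct (classic (exists x0, 0 < x0 < c /\ m x0 < - g + eps)) as [[x0 [Hx0 Hm0]]|Hnot].
  - exists x0. split; [lra|]. intros x Hx.
    pose proof (Hinf x ltac:(lra)). pose proof (Hmono x x0 ltac:(lra) ltac:(lra) ltac:(lra)).
    apply Rabs_def1; lra.
  - exfalso.
    assert (is_upper_bound E (g - eps)).
    { intros v [x [Hx ->]]. destruct (Rle_dec (- m x) (g - eps)) as [?|Hgt]; [assumption|].
      exfalso. apply Hnot. exists x. split; [exact Hx|lra]. }
    pose proof (Hlub _ H). lra.
Qed.

Section Convex1.

Variable phi : R -> R.
Hypothesis Hphi : convex1 phi.

Lemma convex1_chord x y z : 0 <= x -> x < y -> y < z -> z <= 1 ->
  (z - x) * phi y <= (z - y) * phi x + (y - x) * phi z.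
Proof.
  intros Hx Hxy Hyz Hz.
  set (l := (z - y) / (z - x)).
  assert (Hl : 0 <= l <= 1).
  { unfold l; split; [apply Rdiv_le_0_compat; lra|].
    apply Rmult_le_reg_r with (z - x); [lra|]. field_simplify; lra. }
  assert (Hy : l * x + (1 - l) * z = y) by (unfold l; field; lra).
  pose proof (Hphi x z l ltac:(lra) ltac:(lra) Hl) as H. rewrite Hy in H.
  apply Rmult_le_compat_l with (r := z - x) in H; [|lra].
  replace ((z - y) * phi x + (y - x) * phi z)
    with ((z - x) * (l * phi x + (1 - l) * phi z)) by (unfold l; field; lra).
  exact H.
Qed.

Lemma convex1_le_endpoints B x : phi 0 <= B -> phi 1 <= B -> 0 <= x <= 1 -> phi x <= B.
Proof.
  intros H0 H1 Hx.
  pose proof (Hphi 1 0 x ltac:(lra) ltac:(lra) Hx) as H.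
  replace (x * 1 + (1 - x) * 0) with x in H by ring. nra.
Qed.

Lemma convex1_bounded : exists M, forall x, 0 <= x <= 1 -> Rabs (phi x) <= M.
Proof.
  set (B := Rabs (phi 0) + Rabs (phi 1)).
  assert (HB : forall x, 0 <= x <= 1 -> phi x <= B).
  { intros x Hx. apply convex1_le_endpoints; auto; unfold B;
      pose proof (Rle_abs (phi 0)); pose proof (Rle_abs (phi 1));
      pose proof (Rabs_pos (phi 0)); pose proof (Rabs_pos (phi 1)); lra. }
  exists (B + 2 * Rabs (phi (/ 2))).
  intros x Hx. apply Rabs_le.
  pose proof (Hphi x (1 - x) (/ 2) Hx ltac:(lra) ltac:(lra)) as H.
  replace (/ 2 * x + (1 - / 2) * (1 - x)) with (/ 2) in H by field.
  pose proof (HB x Hx). pose proof (HB (1 - x) ltac:(lra)).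
  pose proof (Rabs_pos (phi (/ 2))). pose proof (Rle_abs (- phi (/ 2))).
  rewrite Rabs_Ropp in *. split; lra.
Qed.

Lemma convex1_lipschitz M a b x y :
  (forall z, 0 <= z <= 1 -> Rabs (phi z) <= M) -> 0 < a -> b < 1 ->
  a <= x -> x <= y -> y <= b ->
  Rabs (phi y - phi x) <= 2 * M * (/ a + / (1 - b)) * (y - x).
Proof.
  intros HM Ha Hb Hax Hxy Hyb.
  pose proof (HM 0 ltac:(lra)) as M0. pose proof (HM 1 ltac:(lra)) as M1.
  pose proof (HM x ltac:(lra)) as Mx.
  apply Rabs_le_between in M0, M1, Mx.
  destruct (Req_dec x y) as [<-|Hne].
  { rewrite Rminus_diag, Rabs_R0. lra. }
  assert (ia : 0 < / a) by (apply Rinv_0_lt_compat; lra).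
  assert (ib : 0 < / (1 - b)) by (apply Rinv_0_lt_compat; lra).
  set (d := phi y - phi x).
  assert (Hup : (1 - b) * d <= 2 * M * (y - x)).
  { pose proof (convex1_chord x y 1 ltac:(lra) ltac:(lra) ltac:(lra) ltac:(lra)).
    destruct (Rle_dec 0 d); unfold d in *; nra. }
  assert (Hlo : - (2 * M * (y - x)) <= a * d).
  { pose proof (convex1_chord 0 x y ltac:(lra) ltac:(lra) ltac:(lra) ltac:(lra)).
    destruct (Rle_dec 0 d); unfold d in *; nra. }
  assert (d <= / (1 - b) * (2 * M * (y - x))).
  { replace d with (/ (1 - b) * ((1 - b) * d)) by (field; lra).
    apply Rmult_le_compat_l; lra. }
  assert (- (/ a * (2 * M * (y - x))) <= d).
  { replace d with (/ a * (a * d)) by (field; lra).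
    rewrite Ropp_mult_distr_r. apply Rmult_le_compat_l; lra. }
  assert (0 <= 2 * M * (y - x)) by (apply Rmult_le_pos; lra).
  assert (0 <= / a * (2 * M * (y - x))) by (apply Rmult_le_pos; lra).
  assert (0 <= / (1 - b) * (2 * M * (y - x))) by (apply Rmult_le_pos; lra).
  replace (2 * M * (/ a + / (1 - b)) * (y - x))
    with (/ a * (2 * M * (y - x)) + / (1 - b) * (2 * M * (y - x))) by ring.
  apply Rabs_le. split; lra.
Qed.

Lemma convex1_slope_le x y z : 0 <= x -> x < y -> y < z -> z <= 1 ->
  slope phi x y <= slope phi x z /\ slope phi x z <= slope phi y z.
Proof.
  intros Hx Hxy Hyz Hz. pose proof (convex1_chord x y z Hx Hxy Hyz Hz).
  unfold slope. split; apply Rdiv_le_cross; nra.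
Qed.

Lemma convex1_right_limit : exists L, forall eps, 0 < eps -> exists del, 0 < del /\
  forall x, 0 < x < del -> Rabs (phi x - L) < eps.
Proof.
  set (c := / 2). set (m := fun x => slope phi x c).
  assert (Hc : 0 < c < 1) by (unfold c; lra).
  destruct (nondecreasing_right_limit m c (m 0)) as [L HL]; [lra| | |].
  { intros x y Hx Hxy Hyc. destruct (Req_dec x y) as [<-|Hne]; [lra|].
    apply (convex1_slope_le x y c); unfold c in *; lra. }
  { intros x Hx. apply (convex1_slope_le 0 x c); unfold c in *; lra. }
  exists (phi c - c * L). intros eps Heps.
  destruct (HL (Rmin 1 (eps / 2))) as [del [Hdel Hx]]; [apply Rmin_glb_lt; lra|].
  set (K := Rabs L + 1).
  assert (HK : 0 < K) by (unfold K; pose proof (Rabs_pos L); lra).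
  exists (Rmin del (Rmin c (eps / (2 * K)))). split.
  { repeat apply Rmin_glb_lt; try lra. apply Rdiv_lt_0_compat; lra. }
  intros x [Hx0 Hxd].
  pose proof (Rmin_l del (Rmin c (eps / (2 * K)))).
  pose proof (Rmin_l c (eps / (2 * K))). pose proof (Rmin_r c (eps / (2 * K))).
  pose proof (Rmin_r del (Rmin c (eps / (2 * K)))).
  specialize (Hx x ltac:(lra)).
  pose proof (Rmin_l 1 (eps / 2)). pose proof (Rmin_r 1 (eps / 2)).
  apply Rabs_lt_between' in Hx.
  assert (Hphix : phi x = phi c - (c - x) * m x) by (unfold m, slope; field; lra).
  assert (HmK : Rabs (m x) <= K).
  { unfold K. pose proof (Rle_abs L). pose proof (Rle_abs (- L)). rewrite Rabs_Ropp in *.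
    apply Rabs_le; lra. }
  assert (x * K < eps / 2).
  { apply Rlt_le_trans with ((eps / (2 * K)) * K); [apply Rmult_lt_compat_r; lra|].
    right. field. lra. }
  apply Rabs_le_between in HmK.
  rewrite Hphix. apply Rabs_def1; unfold c in *; nra.
Qed.

Lemma convex1_continuous z : 0 < z < 1 -> continuous phi z.
Proof.
  intros Hz. destruct convex1_bounded as [M HM].
  set (a := z / 2). set (b := (1 + z) / 2).
  set (K := 2 * M * (/ a + / (1 - b)) + 1).
  assert (HM0 : 0 <= M) by (pose proof (HM 0 ltac:(lra)); pose proof (Rabs_pos (phi 0)); lra).
  assert (HK : 0 < K).
  { unfold K, a, b. assert (0 < / (z / 2)) by (apply Rinv_0_lt_compat; lra).
    assert (0 < / (1 - (1 + z) / 2)) by (apply Rinv_0_lt_compat; lra).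
    assert (0 <= 2 * M * (/ (z / 2) + / (1 - (1 + z) / 2))) by (apply Rmult_le_pos; lra). lra. }
  apply continuity_pt_filterlim. intros eps Heps.
  exists (Rmin (z / 2) (Rmin ((1 - z) / 2) (eps / K))). split.
  { repeat apply Rmin_glb_lt; try lra. apply Rdiv_lt_0_compat; lra. }
  intros x [_ Hx]. simpl in Hx. unfold R_dist in *.
  pose proof (Rmin_l (z / 2) (Rmin ((1 - z) / 2) (eps / K))).
  pose proof (Rmin_r (z / 2) (Rmin ((1 - z) / 2) (eps / K))).
  pose proof (Rmin_l ((1 - z) / 2) (eps / K)). pose proof (Rmin_r ((1 - z) / 2) (eps / K)).
  assert (Hd : Rabs (x - z) * K < eps).
  { apply Rlt_le_trans with (eps / K * K); [apply Rmult_lt_compat_r; lra|]. right. field. lra. }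
  assert (Hxz := Rabs_pos (x - z)).
  assert (Hlip : forall p q, a <= p -> p <= q -> q <= b -> Rabs (phi q - phi p) <= K * (q - p)).
  { intros p q Hp Hpq Hq. eapply Rle_trans.
    - apply (convex1_lipschitz M a b); auto; unfold a, b; lra.
    - unfold K. lra. }
  change (Rabs (phi x - phi z) < eps).
  apply Rabs_lt_between in Hx.
  destruct (Rle_dec x z).
  - rewrite Rabs_minus_sym. eapply Rle_lt_trans; [apply Hlip; unfold a, b; lra|].
    rewrite Rabs_left1 in Hd by lra. nra.
  - eapply Rle_lt_trans; [apply Hlip; unfold a, b; lra|].
    rewrite Rabs_right in Hd by lra. nra.
Qed.

Lemma ex_RInt_convex1_left_half : ex_RInt phi 0 (/ 2).
Proof.
  destruct convex1_right_limit as [L HL].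
  (* redefine phi at 0 by its right limit to get a function continuous on [0, 1/2] *)
  set (psi := fun x => if Rle_dec x 0 then L else phi x).
  apply ex_RInt_ext with psi.
  { intros x Hx. rewrite Rmin_left, Rmax_right in Hx by lra.
    unfold psi. destruct (Rle_dec x 0); [lra|reflexivity]. }
  apply (@ex_RInt_continuous R_CompleteNormedModule).
  intros z Hz. rewrite Rmin_left, Rmax_right in Hz by lra.
  destruct (Req_dec z 0) as [->|Hz0].
  - apply continuity_pt_filterlim. intros eps Heps.
    destruct (HL eps Heps) as [del [Hdel Hx]].
    exists del. split; [exact Hdel|]. intros x [_ Hxd]. simpl in Hxd. unfold R_dist in *.
    rewrite Rminus_0_r in Hxd. change (Rabs (psi x - psi 0) < eps). unfold psi.
    destruct (Rle_dec 0 0) as [_|]; [|lra].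
    destruct (Rle_dec x 0).
    + rewrite Rminus_diag, Rabs_R0. exact Heps.
    + apply Hx. apply Rabs_lt_between in Hxd. lra.
  - apply continuous_ext_loc with phi.
    + exists (mkposreal z ltac:(lra)). intros y Hy. simpl in Hy.
      unfold ball in Hy. simpl in Hy. unfold AbsRing_ball, abs, minus, plus, opp in Hy. simpl in Hy.
      apply Rabs_lt_between in Hy.
      unfold psi. destruct (Rle_dec y 0); [lra|reflexivity].
    + apply convex1_continuous. lra.
Qed.

Lemma convex1_subgradient c : 0 < c < 1 ->
  exists m, forall x, 0 <= x <= 1 -> phi c + m * (x - c) <= phi x.
Proof.
  intros Hc.
  assert (Hslopes : forall x z, 0 <= x < c -> c < z <= 1 -> slope phi x c <= slope phi c z).
  { intros x z Hx Hz. pose proof (convex1_slope_le x c z ltac:(lra) ltac:(lra) ltac:(lra) ltac:(lra)).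
    lra. }
  set (E := fun v => exists x, 0 <= x < c /\ v = slope phi x c).
  assert (bE : bound E) by (exists (slope phi c 1); intros v [x [Hx ->]]; apply Hslopes; lra).
  assert (nE : exists v, E v) by (exists (slope phi 0 c), 0; split; [lra|reflexivity]).
  destruct (completeness E bE nE) as [m [Hub Hlub]].
  exists m. intros x Hx.
  destruct (Rtotal_order x c) as [Hlt|[->|Hgt]].
  - assert (Hs : slope phi x c <= m) by (apply Hub; exists x; split; [lra|reflexivity]).
    assert (phi c - phi x = slope phi x c * (c - x)) by (unfold slope; field; lra).
    nra.
  - lra.
  - assert (Hs : m <= slope phi c x).
    { apply Hlub. intros v [y [Hy ->]]. apply Hslopes; lra. }
    assert (phi x - phi c = slope phi c x * (x - c)) by (unfold slope; field; lra).
    nra.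
Qed.

End Convex1.

Lemma convex1_reflect phi : convex1 phi -> convex1 (fun x => phi (1 - x)).
Proof.
  intros Hphi x y l Hx Hy Hl.
  replace (1 - (l * x + (1 - l) * y)) with (l * (1 - x) + (1 - l) * (1 - y)) by ring.
  apply Hphi; lra.
Qed.

Lemma ex_RInt_convex1 phi c d : convex1 phi -> 0 <= c -> c <= d -> d <= 1 -> ex_RInt phi c d.
Proof.
  intros Hphi Hc Hcd Hd.
  assert (Hright : ex_RInt phi (/ 2) 1).
  { pose proof (ex_RInt_convex1_left_half _ (convex1_reflect phi Hphi)) as H.
    assert (H' : ex_RInt (fun x => phi (1 - x)) (-1 * / 2 + 1) (-1 * 1 + 1)).
    { replace (-1 * / 2 + 1) with (/ 2) by field. replace (-1 * 1 + 1) with 0 by ring.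
      apply ex_RInt_swap. exact H. }
    apply ex_RInt_comp_lin, (ex_RInt_scal _ _ _ (-1)) in H'.
    revert H'. apply ex_RInt_ext. intros x _.
    change (-1 * (-1 * phi (1 - (-1 * x + 1))) = phi x).
    replace (1 - (-1 * x + 1)) with x by ring. ring. }
  assert (Hall : ex_RInt phi 0 1).
  { apply (ex_RInt_Chasles _ 0 (/ 2) 1); [apply ex_RInt_convex1_left_half; exact Hphi|exact Hright]. }
  apply (@ex_RInt_Chasles_2 R_CompleteNormedModule _ 0); [lra|].
  apply (@ex_RInt_Chasles_1 R_CompleteNormedModule _ _ _ 1); [lra|exact Hall].
Qed.

Lemma RInt_plus_R f g a b : ex_RInt f a b -> ex_RInt g a b ->
  RInt (fun x => f x + g x) a b = RInt f a b + RInt g a b.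
Proof. exact (@RInt_plus R_CompleteNormedModule f g a b). Qed.

Lemma RInt_ext_R (f g : R -> R) a b : a <= b -> (forall x, a < x < b -> f x = g x) ->
  RInt f a b = RInt g a b.
Proof.
  intros Hab H. apply RInt_ext. intros x Hx.
  rewrite Rmin_left, Rmax_right in Hx by lra. auto.
Qed.

Lemma RInt_scal_R f a b k : ex_RInt f a b -> RInt (fun x => k * f x) a b = k * RInt f a b.
Proof. exact (@RInt_scal R_CompleteNormedModule f a b k). Qed.

Lemma RInt_const_R a b c : RInt (fun _ => c) a b = (b - a) * c.
Proof. exact (@RInt_const R_CompleteNormedModule a b c). Qed.

Lemma RInt_lincomb f g a b al be : ex_RInt f a b -> ex_RInt g a b ->
  RInt (fun x => al * f x + be * g x) a b = al * RInt f a b + be * RInt g a b.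
Proof.
  intros Hf Hg.
  rewrite RInt_plus_R, !RInt_scal_R by auto using (@ex_RInt_scal R_NormedModule).
  reflexivity.
Qed.

Lemma ex_RInt_lincomb f g a b al be : ex_RInt f a b -> ex_RInt g a b ->
  ex_RInt (fun x => al * f x + be * g x) a b.
Proof.
  intros Hf Hg. apply (@ex_RInt_plus R_NormedModule (fun x => al * f x) (fun x => be * g x)).
  - apply (@ex_RInt_scal R_NormedModule f). exact Hf.
  - apply (@ex_RInt_scal R_NormedModule g). exact Hg.
Qed.

Lemma RInt_le_shift f g a b K : a <= b -> ex_RInt f a b -> ex_RInt g a b ->
  (forall x, a < x < b -> f x <= g x + K) -> RInt f a b <= RInt g a b + (b - a) * K.
Proof.
  intros Hab Hf Hg H.
  assert (Hc : ex_RInt (fun _ => 1) a b) by apply ex_RInt_const.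
  replace (RInt g a b + (b - a) * K) with (1 * RInt g a b + K * RInt (fun _ => 1) a b)
    by (rewrite RInt_const_R; ring).
  rewrite <- RInt_lincomb by assumption.
  apply RInt_le; auto. { apply ex_RInt_lincomb; assumption. }
  intros x Hx. specialize (H x Hx). lra.
Qed.

Lemma RInt_scale phi l : ex_RInt phi 0 l -> ex_RInt (fun x => phi (l * x)) 0 1 ->
  RInt phi 0 l = l * RInt (fun x => phi (l * x)) 0 1.
Proof.
  intros H H'.
  rewrite <- RInt_scal_R by exact H'.
  assert (E : ex_RInt phi (l * 0 + 0) (l * 1 + 0)) by (rewrite Rmult_0_r, Rmult_1_r, !Rplus_0_r; exact H).
  pose proof (@RInt_comp_lin R_CompleteNormedModule phi l 0 0 1 E) as Hcl.
  rewrite Rmult_0_r, Rmult_1_r, !Rplus_0_r in Hcl. rewrite <- Hcl.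
  apply RInt_ext. intros x _. rewrite Rplus_0_r. reflexivity.
Qed.

Lemma convex1_RInt_param (G : R -> R -> R) c d : c <= d ->
  (forall y, c <= y <= d -> convex1 (fun x => G x y)) ->
  (forall x, 0 <= x <= 1 -> ex_RInt (G x) c d) ->
  convex1 (fun x => RInt (G x) c d).
Proof.
  intros Hcd Hconv Hex x y l Hx Hy Hl.
  rewrite <- RInt_lincomb by auto.
  apply RInt_le; auto.
  - apply Hex. split; nra.
  - apply ex_RInt_lincomb; auto.
  - intros z Hz. apply (Hconv z ltac:(lra)); auto.
Qed.

(** * Convex functions on the unit cube and their box integrals *)

Definition convex3 (F : R -> R -> R -> R) : Prop :=
  forall s1 t1 r1 s2 t2 r2 l, 0 <= s1 <= 1 -> 0 <= t1 <= 1 -> 0 <= r1 <= 1 ->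
    0 <= s2 <= 1 -> 0 <= t2 <= 1 -> 0 <= r2 <= 1 -> 0 <= l <= 1 ->
    F (l * s1 + (1 - l) * s2) (l * t1 + (1 - l) * t2) (l * r1 + (1 - l) * r2)
      <= l * F s1 t1 r1 + (1 - l) * F s2 t2 r2.

Definition affine01 (p : R -> R) : Prop :=
  (forall x, 0 <= x <= 1 -> 0 <= p x <= 1) /\
  (forall x y l, p (l * x + (1 - l) * y) = l * p x + (1 - l) * p y).

Lemma affine01_id : affine01 (fun x => x).
Proof. split; auto. Qed.

Lemma affine01_const c : 0 <= c <= 1 -> affine01 (fun _ => c).
Proof. split; [auto|intros; ring]. Qed.

Lemma affine01_scale c : 0 <= c <= 1 -> affine01 (fun x => c * x).
Proof. split; [intros; split; nra|intros; ring]. Qed.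

Lemma affine01_scaler c : 0 <= c <= 1 -> affine01 (fun x => x * c).
Proof. split; [intros; split; nra|intros; ring]. Qed.

Section AffineComposition.

Variables (F : R -> R -> R -> R) (p q w : R -> R).
Hypotheses (HF : convex3 F) (Hp : affine01 p) (Hq : affine01 q) (Hw : affine01 w).

Lemma convex3_comp_affine : convex3 (fun s t r => F (p s) (q t) (w r)).
Proof.
  destruct Hp as [Ip Ep], Hq as [Iq Eq], Hw as [Iw Ew].
  intros s1 t1 r1 s2 t2 r2 l Hs1 Ht1 Hr1 Hs2 Ht2 Hr2 Hl.
  rewrite Ep, Eq, Ew. apply HF; auto.
Qed.

Lemma convex1_comp_affine : convex1 (fun x => F (p x) (q x) (w x)).
Proof.
  destruct Hp as [Ip Ep], Hq as [Iq Eq], Hw as [Iw Ew].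
  intros x y l Hx Hy Hl. rewrite Ep, Eq, Ew. apply HF; auto.
Qed.

End AffineComposition.

Definition box3 (F : R -> R -> R -> R) (a1 b1 a2 b2 a3 b3 : R) : R :=
  RInt (fun s => RInt (fun t => RInt (fun r => F s t r) a3 b3) a2 b2) a1 b1.

Section Box3.

Variable F : R -> R -> R -> R.
Hypothesis HF : convex3 F.

Lemma ex_RInt_box3_r s t a b : 0 <= s <= 1 -> 0 <= t <= 1 -> 0 <= a -> a <= b -> b <= 1 ->
  ex_RInt (fun r => F s t r) a b.
Proof.
  intros Hs Ht Ha Hab Hb. apply ex_RInt_convex1; auto.
  apply (convex1_comp_affine F (fun _ => s) (fun _ => t) (fun r => r)); auto using
    affine01_const, affine01_id.
Qed.

Lemma ex_RInt_box3_tr s a2 b2 a3 b3 : 0 <= s <= 1 ->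
  0 <= a2 -> a2 <= b2 -> b2 <= 1 -> 0 <= a3 -> a3 <= b3 -> b3 <= 1 ->
  ex_RInt (fun t => RInt (fun r => F s t r) a3 b3) a2 b2.
Proof.
  intros Hs Ha2 Hab2 Hb2 Ha3 Hab3 Hb3. apply ex_RInt_convex1; auto.
  apply (convex1_RInt_param (fun t r => F s t r)); auto.
  - intros r Hr. apply (convex1_comp_affine F (fun _ => s) (fun t => t) (fun _ => r));
      [exact HF|apply affine01_const; lra|apply affine01_id|apply affine01_const; lra].
  - intros t Ht. apply ex_RInt_box3_r; auto.
Qed.

Lemma ex_RInt_box3 a1 b1 a2 b2 a3 b3 :
  0 <= a1 -> a1 <= b1 -> b1 <= 1 -> 0 <= a2 -> a2 <= b2 -> b2 <= 1 ->
  0 <= a3 -> a3 <= b3 -> b3 <= 1 ->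
  ex_RInt (fun s => RInt (fun t => RInt (fun r => F s t r) a3 b3) a2 b2) a1 b1.
Proof.
  intros Ha1 Hab1 Hb1 Ha2 Hab2 Hb2 Ha3 Hab3 Hb3. apply ex_RInt_convex1; auto.
  apply (convex1_RInt_param (fun s t => RInt (fun r => F s t r) a3 b3)); auto.
  - intros t Ht. apply (convex1_RInt_param (fun s r => F s t r)); auto.
    + intros r Hr. apply (convex1_comp_affine F (fun s => s) (fun _ => t) (fun _ => r));
        [exact HF|apply affine01_id|apply affine01_const; lra|apply affine01_const; lra].
    + intros s Hs. apply ex_RInt_box3_r; auto; lra.
  - intros s Hs. apply ex_RInt_box3_tr; auto.
Qed.

Lemma box3_split1 a1 m b1 a2 b2 a3 b3 : 0 <= a1 -> a1 <= m -> m <= b1 -> b1 <= 1 ->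
  0 <= a2 -> a2 <= b2 -> b2 <= 1 -> 0 <= a3 -> a3 <= b3 -> b3 <= 1 ->
  box3 F a1 m a2 b2 a3 b3 + box3 F m b1 a2 b2 a3 b3 = box3 F a1 b1 a2 b2 a3 b3.
Proof.
  intros. unfold box3.
  apply (@RInt_Chasles R_CompleteNormedModule); apply ex_RInt_box3; lra.
Qed.

Lemma box3_split2 a1 b1 a2 m b2 a3 b3 : 0 <= a1 -> a1 <= b1 -> b1 <= 1 ->
  0 <= a2 -> a2 <= m -> m <= b2 -> b2 <= 1 -> 0 <= a3 -> a3 <= b3 -> b3 <= 1 ->
  box3 F a1 b1 a2 m a3 b3 + box3 F a1 b1 m b2 a3 b3 = box3 F a1 b1 a2 b2 a3 b3.
Proof.
  intros. unfold box3.
  rewrite <- RInt_plus_R by (apply ex_RInt_box3; lra).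
  apply RInt_ext_R; [lra|]. intros s Hs.
  apply (@RInt_Chasles R_CompleteNormedModule); apply ex_RInt_box3_tr; lra.
Qed.

Lemma box3_split3 a1 b1 a2 b2 a3 m b3 : 0 <= a1 -> a1 <= b1 -> b1 <= 1 ->
  0 <= a2 -> a2 <= b2 -> b2 <= 1 -> 0 <= a3 -> a3 <= m -> m <= b3 -> b3 <= 1 ->
  box3 F a1 b1 a2 b2 a3 m + box3 F a1 b1 a2 b2 m b3 = box3 F a1 b1 a2 b2 a3 b3.
Proof.
  intros. unfold box3.
  rewrite <- RInt_plus_R by (apply ex_RInt_box3; lra).
  apply RInt_ext_R; [lra|]. intros s Hs.
  rewrite <- RInt_plus_R by (apply ex_RInt_box3_tr; lra).
  apply RInt_ext_R; [lra|]. intros t Ht.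
  apply (@RInt_Chasles R_CompleteNormedModule); apply ex_RInt_box3_r; lra.
Qed.

Lemma box3_abs_le a1 b1 a2 b2 a3 b3 K : 0 <= a1 -> a1 <= b1 -> b1 <= 1 ->
  0 <= a2 -> a2 <= b2 -> b2 <= 1 -> 0 <= a3 -> a3 <= b3 -> b3 <= 1 ->
  (forall s t r, a1 <= s <= b1 -> a2 <= t <= b2 -> a3 <= r <= b3 -> Rabs (F s t r) <= K) ->
  Rabs (box3 F a1 b1 a2 b2 a3 b3) <= (b1 - a1) * ((b2 - a2) * ((b3 - a3) * K)).
Proof.
  intros. unfold box3.
  apply abs_RInt_le_const; [lra|apply ex_RInt_box3; lra|]. intros s Hs.
  apply abs_RInt_le_const; [lra|apply ex_RInt_box3_tr; lra|]. intros t Ht.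
  apply abs_RInt_le_const; [lra|apply ex_RInt_box3_r; lra|]. auto.
Qed.

End Box3.

Lemma box3_le_shift F G a1 b1 a2 b2 a3 b3 K : convex3 F -> convex3 G ->
  0 <= a1 -> a1 <= b1 -> b1 <= 1 -> 0 <= a2 -> a2 <= b2 -> b2 <= 1 ->
  0 <= a3 -> a3 <= b3 -> b3 <= 1 ->
  (forall s t r, a1 <= s <= b1 -> a2 <= t <= b2 -> a3 <= r <= b3 -> F s t r <= G s t r + K) ->
  box3 F a1 b1 a2 b2 a3 b3 <= box3 G a1 b1 a2 b2 a3 b3 + (b1 - a1) * ((b2 - a2) * ((b3 - a3) * K)).
Proof.
  intros HF HG H1 H2 H3 H4 H5 H6 H7 H8 H9 H. unfold box3.
  apply RInt_le_shift; [lra|apply ex_RInt_box3; auto|apply ex_RInt_box3; auto|]. intros s Hs.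
  apply RInt_le_shift; [lra|apply ex_RInt_box3_tr; auto; lra|apply ex_RInt_box3_tr; auto; lra|].
  intros t Ht.
  apply RInt_le_shift; [lra|apply ex_RInt_box3_r; auto; lra|apply ex_RInt_box3_r; auto; lra|].
  intros r Hr. apply H; lra.
Qed.

Lemma box3_dist_le F G a1 b1 a2 b2 a3 b3 K : convex3 F -> convex3 G ->
  0 <= a1 -> a1 <= b1 -> b1 <= 1 -> 0 <= a2 -> a2 <= b2 -> b2 <= 1 ->
  0 <= a3 -> a3 <= b3 -> b3 <= 1 ->
  (forall s t r, a1 <= s <= b1 -> a2 <= t <= b2 -> a3 <= r <= b3 -> Rabs (F s t r - G s t r) <= K) ->
  Rabs (box3 F a1 b1 a2 b2 a3 b3 - box3 G a1 b1 a2 b2 a3 b3)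
    <= (b1 - a1) * ((b2 - a2) * ((b3 - a3) * K)).
Proof.
  intros HF HG H1 H2 H3 H4 H5 H6 H7 H8 H9 H.
  apply Rabs_le_between'. split.
  - assert (box3 G a1 b1 a2 b2 a3 b3 <= box3 F a1 b1 a2 b2 a3 b3 + (b1 - a1) * ((b2 - a2) * ((b3 - a3) * K))).
    { apply box3_le_shift; auto. intros s t r Hs Ht Hr.
      specialize (H s t r Hs Ht Hr). apply Rabs_le_between' in H. lra. }
    lra.
  - apply box3_le_shift; auto. intros s t r Hs Ht Hr.
    specialize (H s t r Hs Ht Hr). apply Rabs_le_between' in H. lra.
Qed.

Lemma box3_const1 (G : R -> R -> R) a1 b1 a2 b2 a3 b3 :
  box3 (fun _ t r => G t r) a1 b1 a2 b2 a3 b3 = (b1 - a1) * box3 (fun _ t r => G t r) 0 1 a2 b2 a3 b3.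
Proof. unfold box3. rewrite !RInt_const_R. ring. Qed.

Lemma box3_const2 (G : R -> R -> R) a1 b1 a2 b2 a3 b3 : convex3 (fun s _ r => G s r) ->
  0 <= a1 -> a1 <= b1 -> b1 <= 1 -> 0 <= a3 -> a3 <= b3 -> b3 <= 1 ->
  box3 (fun s _ r => G s r) a1 b1 a2 b2 a3 b3 = (b2 - a2) * box3 (fun s _ r => G s r) a1 b1 0 1 a3 b3.
Proof.
  intros HG **. unfold box3.
  rewrite <- (RInt_scal_R (fun s => RInt (fun _ => RInt (fun r => G s r) a3 b3) 0 1))
    by (apply (ex_RInt_box3 _ HG); lra).
  apply RInt_ext_R; [lra|]. intros s _. rewrite !RInt_const_R. ring.
Qed.

Lemma box3_const3 (G : R -> R -> R) a1 b1 a2 b2 a3 b3 : convex3 (fun s t _ => G s t) ->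
  0 <= a1 -> a1 <= b1 -> b1 <= 1 -> 0 <= a2 -> a2 <= b2 -> b2 <= 1 ->
  box3 (fun s t _ => G s t) a1 b1 a2 b2 a3 b3 = (b3 - a3) * box3 (fun s t _ => G s t) a1 b1 a2 b2 0 1.
Proof.
  intros HG **. unfold box3.
  rewrite <- (RInt_scal_R (fun s => RInt (fun t => RInt (fun _ => G s t) 0 1) a2 b2))
    by (apply (ex_RInt_box3 _ HG); lra).
  apply RInt_ext_R; [lra|]. intros s Hs.
  rewrite <- (RInt_scal_R (fun t => RInt (fun _ => G s t) 0 1))
    by (apply (ex_RInt_box3_tr _ HG); lra).
  apply RInt_ext_R; [lra|]. intros t _. rewrite !RInt_const_R. ring.
Qed.

Lemma box3_unit_const (H : R -> R -> R -> R) c :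
  (forall s t r, 0 < s < 1 -> 0 < t < 1 -> 0 < r < 1 -> H s t r = c) -> box3 H 0 1 0 1 0 1 = c.
Proof.
  intros Hc. unfold box3.
  transitivity (RInt (fun _ => RInt (fun _ => RInt (fun _ => c) 0 1) 0 1) 0 1).
  - apply RInt_ext_R; [lra|]. intros s Hs. apply RInt_ext_R; [lra|]. intros t Ht.
    apply RInt_ext_R; [lra|]. intros r Hr. auto.
  - rewrite !RInt_const_R. ring.
Qed.

Lemma convex1_box3_param (H : R -> R -> R -> R -> R) :
  (forall l, 0 <= l <= 1 -> convex3 (H l)) ->
  (forall s t r, 0 <= s <= 1 -> 0 <= t <= 1 -> 0 <= r <= 1 -> convex1 (fun l => H l s t r)) ->
  convex1 (fun l => box3 (H l) 0 1 0 1 0 1).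
Proof.
  intros HH Hpar. unfold box3.
  apply convex1_RInt_param; [lra| |intros l Hl; apply (ex_RInt_box3 _ (HH l Hl)); lra].
  intros s Hs. apply convex1_RInt_param; [lra| |intros l Hl; apply (ex_RInt_box3_tr _ (HH l Hl)); lra].
  intros t Ht. apply convex1_RInt_param; [lra| |intros l Hl; apply (ex_RInt_box3_r _ (HH l Hl)); lra].
  intros r Hr. auto.
Qed.

Lemma box3_scale F l1 l2 l3 : convex3 F -> 0 <= l1 <= 1 -> 0 <= l2 <= 1 -> 0 <= l3 <= 1 ->
  box3 F 0 l1 0 l2 0 l3 = l1 * l2 * l3 * box3 (fun s t r => F (l1 * s) (l2 * t) (l3 * r)) 0 1 0 1 0 1.
Proof.
  intros HF H1 H2 H3.
  set (F3 := fun s t r => F s t (l3 * r)).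
  set (F23 := fun s t r => F s (l2 * t) (l3 * r)).
  set (F123 := fun s t r => F (l1 * s) (l2 * t) (l3 * r)).
  assert (HF3 : convex3 F3).
  { apply (convex3_comp_affine F (fun s => s) (fun t => t) (fun r => l3 * r));
      auto using affine01_id, affine01_scale. }
  assert (HF23 : convex3 F23).
  { apply (convex3_comp_affine F (fun s => s) (fun t => l2 * t) (fun r => l3 * r));
      auto using affine01_id, affine01_scale. }
  assert (HF123 : convex3 F123).
  { apply (convex3_comp_affine F (fun s => l1 * s) (fun t => l2 * t) (fun r => l3 * r));
      auto using affine01_scale. }
  unfold box3.
  transitivity (RInt (fun s => l2 * l3 * RInt (fun t => RInt (fun r => F23 s t r) 0 1) 0 1) 0 l1).
  - apply RInt_ext_R; [lra|]. intros s Hs.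
    transitivity (RInt (fun t => l3 * RInt (fun r => F3 s t r) 0 1) 0 l2).
    + apply RInt_ext_R; [lra|]. intros t Ht.
      apply RInt_scale; [apply ex_RInt_box3_r; auto; lra|apply (ex_RInt_box3_r _ HF3); lra].
    + rewrite RInt_scal_R by (apply (ex_RInt_box3_tr _ HF3); lra).
      rewrite (RInt_scale (fun t => RInt (fun r => F3 s t r) 0 1)).
      * unfold F3, F23. ring.
      * apply (ex_RInt_box3_tr _ HF3); lra.
      * apply (ex_RInt_box3_tr _ HF23); lra.
  - rewrite RInt_scal_R by (apply (ex_RInt_box3 _ HF23); lra).
    rewrite (RInt_scale (fun s => RInt (fun t => RInt (fun r => F23 s t r) 0 1) 0 1)).
    + unfold F23, F123. ring.
    + apply (ex_RInt_box3 _ HF23); lra.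
    + apply (ex_RInt_box3 _ HF123); lra.
Qed.

(** * Comparing functions through their left derivatives *)

Definition lipschitz01 (G : R -> R) (C : R) : Prop :=
  forall mu l, 0 <= mu -> mu <= l -> l <= 1 -> Rabs (G l - G mu) <= C * (l - mu).

Definition uniform_left_deriv (G g : R -> R) : Prop :=
  forall a b, 0 < a -> b < 1 -> exists K, forall mu l, a <= mu -> mu <= l -> l <= b ->
    Rabs (G l - G mu - (l - mu) * g l) <= K * (l - mu) ^ 2.

Lemma le_of_quadratic_defect (G : R -> R) a b K : a <= b ->
  (forall mu l, a <= mu -> mu <= l -> l <= b -> G mu - K * (l - mu) ^ 2 <= G l) ->
  G a <= G b.
Proof.
  intros Hab H. apply Rle_plus_epsilon. intros eps Heps.
  set (D := Rabs K * (b - a) ^ 2).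
  assert (HD : 0 <= D) by (apply Rmult_le_pos; [apply Rabs_pos|apply pow2_ge_0]).
  destruct (archimed_cor1 (eps / (D + 1))) as [n [Hn Hn0]].
  { apply Rdiv_lt_0_compat; lra. }
  assert (HnR : 0 < INR n) by (apply lt_0_INR; exact Hn0).
  set (h := (b - a) / INR n).
  assert (Hh : 0 <= h) by (unfold h; apply Rdiv_le_0_compat; lra).
  (* telescoping along the partition a, a + h, ..., a + n h = b *)
  assert (Hstep : forall k, (k <= n)%nat -> G a - INR k * (K * h ^ 2) <= G (a + INR k * h)).
  { induction k as [|k IH]; intros Hk.
    - simpl. replace (a + 0 * h) with a by ring. lra.
    - specialize (IH ltac:(lia)).
      assert (Hk' : INR (S k) <= INR n) by (apply le_INR; exact Hk).
      assert (Hk0 : 0 <= INR k) by apply pos_INR.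
      assert (Hb : a + INR (S k) * h <= b).
      { apply Rle_trans with (a + INR n * h); [nra|]. unfold h. right. field. lra. }
      rewrite S_INR in *.
      pose proof (H (a + INR k * h) (a + (INR k + 1) * h) ltac:(nra) ltac:(nra) Hb) as Hs.
      replace (a + (INR k + 1) * h - (a + INR k * h)) with h in Hs by ring. lra. }
  specialize (Hstep n (Nat.le_refl n)).
  replace (a + INR n * h) with b in Hstep by (unfold h; field; lra).
  assert (INR n * (K * h ^ 2) <= D / INR n).
  { replace (INR n * (K * h ^ 2)) with (K * (b - a) ^ 2 / INR n) by (unfold h; field; lra).
    unfold D. apply Rmult_le_compat_r; [left; apply Rinv_0_lt_compat; lra|].
    apply Rmult_le_compat_r; [apply pow2_ge_0|apply Rle_abs]. }
  assert (D / INR n <= eps).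
  { apply Rle_trans with ((D + 1) * / INR n); [unfold Rdiv; apply Rmult_le_compat_r; [left; apply Rinv_0_lt_compat|]; lra|].
    apply Rle_trans with ((D + 1) * (eps / (D + 1))); [apply Rmult_le_compat_l; lra|].
    right. field. lra. }
  lra.
Qed.

Lemma increment_le_of_left_deriv_le (G1 G2 g1 g2 : R -> R) C1 C2 :
  lipschitz01 G1 C1 -> lipschitz01 G2 C2 ->
  uniform_left_deriv G1 g1 -> uniform_left_deriv G2 g2 ->
  (forall l, 0 < l < 1 -> g1 l <= g2 l) ->
  G1 1 - G1 0 <= G2 1 - G2 0.
Proof.
  intros L1 L2 D1 D2 Hg.
  set (D := fun l => G2 l - G1 l).
  apply Rle_plus_epsilon. intros eps Heps.
  set (C := Rabs C1 + Rabs C2 + 1).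
  assert (HC : 0 < C) by (unfold C; pose proof (Rabs_pos C1); pose proof (Rabs_pos C2); lra).
  set (d := Rmin (/ 4) (eps / (2 * C))).
  assert (Hd : 0 < d) by (apply Rmin_glb_lt; [lra|apply Rdiv_lt_0_compat; lra]).
  assert (Hd4 : d <= / 4) by apply Rmin_l.
  assert (HdC : C * d <= eps / 2).
  { apply Rle_trans with (C * (eps / (2 * C))); [apply Rmult_le_compat_l; [lra|apply Rmin_r]|].
    right. field. lra. }
  (* away from the endpoints the defects are quadratic, near them the Lipschitz bounds suffice *)
  destruct (D1 d (1 - d) Hd ltac:(lra)) as [K1 HK1].
  destruct (D2 d (1 - d) Hd ltac:(lra)) as [K2 HK2].
  assert (Hmid : D d <= D (1 - d)).
  { apply (le_of_quadratic_defect D d (1 - d) (K1 + K2)); [lra|].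
    intros mu l Hmu Hml Hl.
    specialize (HK1 mu l Hmu Hml Hl). specialize (HK2 mu l Hmu Hml Hl).
    specialize (Hg l ltac:(lra)).
    apply Rabs_le_between in HK1, HK2.
    assert (0 <= (l - mu) * (g2 l - g1 l)) by (apply Rmult_le_pos; lra).
    unfold D. nra. }
  pose proof (L1 0 d ltac:(lra) ltac:(lra) ltac:(lra)) as E10.
  pose proof (L2 0 d ltac:(lra) ltac:(lra) ltac:(lra)) as E20.
  pose proof (L1 (1 - d) 1 ltac:(lra) ltac:(lra) ltac:(lra)) as E11.
  pose proof (L2 (1 - d) 1 ltac:(lra) ltac:(lra) ltac:(lra)) as E21.
  apply Rabs_le_between in E10, E20, E11, E21.
  replace (d - 0) with d in * by ring. replace (1 - (1 - d)) with d in * by ring.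
  assert (C1 * d + C2 * d <= C * d).
  { unfold C. pose proof (Rle_abs C1). pose proof (Rle_abs C2). nra. }
  unfold D in Hmid. lra.
Qed.

Definition cubic_quartic (c3 c4 l : R) : R := c3 * l ^ 3 + c4 * l ^ 4.

Lemma cubic_quartic_lipschitz c3 c4 : lipschitz01 (cubic_quartic c3 c4) (3 * Rabs c3 + 4 * Rabs c4).
Proof.
  intros mu l Hmu Hml Hl. unfold cubic_quartic.
  replace (c3 * l ^ 3 + c4 * l ^ 4 - (c3 * mu ^ 3 + c4 * mu ^ 4))
    with ((l - mu) * (c3 * (l ^ 2 + l * mu + mu ^ 2) + c4 * (l ^ 3 + l ^ 2 * mu + l * mu ^ 2 + mu ^ 3)))
    by ring.
  rewrite Rabs_mult, (Rabs_right (l - mu)) by lra. rewrite Rmult_comm.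
  apply Rmult_le_compat_r; [lra|].
  eapply Rle_trans; [apply Rabs_triang|]. rewrite !Rabs_mult.
  assert (H2 : 0 <= l ^ 2 + l * mu + mu ^ 2 <= 3) by (split; nra).
  assert (H3 : 0 <= l ^ 3 + l ^ 2 * mu + l * mu ^ 2 + mu ^ 3 <= 4).
  { assert (0 <= l * mu <= 1) by (split; nra). assert (0 <= l ^ 2 <= 1) by (split; nra).
    assert (0 <= mu ^ 2 <= 1) by (split; nra). split; nra. }
  rewrite (Rabs_right (_ + _ + _)) by lra. rewrite (Rabs_right (_ + _ + _ + _)) by lra.
  pose proof (Rabs_pos c3). pose proof (Rabs_pos c4). nra.
Qed.

Lemma cubic_quartic_left_deriv c3 c4 :
  uniform_left_deriv (cubic_quartic c3 c4) (fun l => 3 * c3 * l ^ 2 + 4 * c4 * l ^ 3).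
Proof.
  intros a b Ha Hb. exists (3 * Rabs c3 + 6 * Rabs c4).
  intros mu l Hmu Hml Hl. unfold cubic_quartic.
  replace (c3 * l ^ 3 + c4 * l ^ 4 - (c3 * mu ^ 3 + c4 * mu ^ 4) - (l - mu) * (3 * c3 * l ^ 2 + 4 * c4 * l ^ 3))
    with (- ((l - mu) ^ 2 * (c3 * (mu + 2 * l) + c4 * (mu ^ 2 + 2 * mu * l + 3 * l ^ 2)))) by ring.
  rewrite Rabs_Ropp, Rabs_mult, (Rabs_right ((l - mu) ^ 2)) by (apply Rle_ge, pow2_ge_0).
  rewrite Rmult_comm. apply Rmult_le_compat_r; [apply pow2_ge_0|].
  eapply Rle_trans; [apply Rabs_triang|]. rewrite !Rabs_mult.
  assert (H2 : 0 <= mu + 2 * l <= 3) by lra.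
  assert (H3 : 0 <= mu ^ 2 + 2 * mu * l + 3 * l ^ 2 <= 6) by (split; nra).
  rewrite (Rabs_right (mu + 2 * l)) by lra. rewrite (Rabs_right (_ + _ + _)) by lra.
  pose proof (Rabs_pos c3). pose proof (Rabs_pos c4). nra.
Qed.

(** * Integrals over the cubes [0, l]^3 *)

Definition cube_int (F : R -> R -> R -> R) (l : R) : R := box3 F 0 l 0 l 0 l.

(* A face integral is a box integral that is constant in the coordinate normal
   to the face, integrated over [0, 1]. *)
Definition face_int (F : R -> R -> R -> R) (l : R) : R :=
  box3 (fun _ t r => F l t r) 0 1 0 l 0 l + box3 (fun s _ r => F s l r) 0 l 0 1 0 l
  + box3 (fun s t _ => F s t l) 0 l 0 l 0 1.

Definition face_avg (F : R -> R -> R -> R) (l : R) : R :=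
  / 3 * (box3 (fun _ t r => F l (l * t) (l * r)) 0 1 0 1 0 1
       + box3 (fun s _ r => F (l * s) l (l * r)) 0 1 0 1 0 1
       + box3 (fun s t _ => F (l * s) (l * t) l) 0 1 0 1 0 1).

Lemma Rmult_unit_le x y : 0 <= x <= 1 -> 0 <= y -> 0 <= x * y <= y.
Proof. intros Hx Hy. split; nra. Qed.

Section CubeIntegral.

Variables (F : R -> R -> R -> R) (M : R).
Hypothesis HF : convex3 F.
Hypothesis HM : forall s t r, 0 <= s <= 1 -> 0 <= t <= 1 -> 0 <= r <= 1 -> Rabs (F s t r) <= M.

Lemma convex3_face1 l : 0 <= l <= 1 -> convex3 (fun _ t r => F l t r).
Proof.
  intros Hl. apply (convex3_comp_affine F (fun _ => l) (fun t => t) (fun r => r));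
    auto using affine01_id, affine01_const.
Qed.

Lemma convex3_face2 l : 0 <= l <= 1 -> convex3 (fun s _ r => F s l r).
Proof.
  intros Hl. apply (convex3_comp_affine F (fun s => s) (fun _ => l) (fun r => r));
    auto using affine01_id, affine01_const.
Qed.

Lemma convex3_face3 l : 0 <= l <= 1 -> convex3 (fun s t _ => F s t l).
Proof.
  intros Hl. apply (convex3_comp_affine F (fun s => s) (fun t => t) (fun _ => l));
    auto using affine01_id, affine01_const.
Qed.

Lemma face_int_scale l : 0 <= l <= 1 -> face_int F l = 3 * l ^ 2 * face_avg F l.
Proof.
  intros Hl. unfold face_int, face_avg.
  rewrite (box3_scale _ 1 l l), (box3_scale _ l 1 l), (box3_scale _ l l 1)
    by (first [apply convex3_face1 | apply convex3_face2 | apply convex3_face3 | idtac]; lra).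
  field.
Qed.

Lemma cube_int_0 : cube_int F 0 = 0.
Proof. unfold cube_int, box3. apply (@RInt_point R_CompleteNormedModule). Qed.

Lemma cube_bound_nonneg : 0 <= M.
Proof. pose proof (HM 0 0 0 ltac:(lra) ltac:(lra) ltac:(lra)). pose proof (Rabs_pos (F 0 0 0)). lra. Qed.

Lemma cube_int_shell mu l : 0 <= mu -> mu <= l -> l <= 1 ->
  cube_int F l - cube_int F mu
    = box3 F mu l 0 l 0 l + box3 F 0 mu mu l 0 l + box3 F 0 mu 0 mu mu l.
Proof.
  intros. unfold cube_int.
  rewrite <- (box3_split1 F HF 0 mu l 0 l 0 l), <- (box3_split2 F HF 0 mu 0 mu l 0 l),
    <- (box3_split3 F HF 0 mu 0 mu 0 mu l) by lra.
  ring.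
Qed.

Lemma cube_int_lipschitz : lipschitz01 (cube_int F) (3 * M).
Proof.
  intros mu l Hmu Hml Hl. rewrite cube_int_shell by lra.
  assert (HM0 := cube_bound_nonneg).
  assert (Hbox : forall a1 b1 a2 b2 a3 b3, 0 <= a1 -> a1 <= b1 -> b1 <= 1 -> 0 <= a2 -> a2 <= b2 ->
    b2 <= 1 -> 0 <= a3 -> a3 <= b3 -> b3 <= 1 ->
    Rabs (box3 F a1 b1 a2 b2 a3 b3) <= (b1 - a1) * ((b2 - a2) * ((b3 - a3) * M))).
  { intros. apply box3_abs_le; auto. intros. apply HM; lra. }
  pose proof (Hbox mu l 0 l 0 l ltac:(lra) ltac:(lra) ltac:(lra) ltac:(lra) ltac:(lra) ltac:(lra)
    ltac:(lra) ltac:(lra) ltac:(lra)) as P1.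
  pose proof (Hbox 0 mu mu l 0 l ltac:(lra) ltac:(lra) ltac:(lra) ltac:(lra) ltac:(lra) ltac:(lra)
    ltac:(lra) ltac:(lra) ltac:(lra)) as P2.
  pose proof (Hbox 0 mu 0 mu mu l ltac:(lra) ltac:(lra) ltac:(lra) ltac:(lra) ltac:(lra) ltac:(lra)
    ltac:(lra) ltac:(lra) ltac:(lra)) as P3.
  assert (V : forall x y, 0 <= x <= 1 -> 0 <= y <= 1 -> x * (y * ((l - mu) * M)) <= (l - mu) * M).
  { intros x y Hx Hy. assert (0 <= (l - mu) * M) by (apply Rmult_le_pos; lra).
    assert (0 <= y * ((l - mu) * M) <= (l - mu) * M) by (split; nra). nra. }
  pose proof (V (l - 0) (l - 0) ltac:(lra) ltac:(lra)).
  pose proof (V (mu - 0) (l - 0) ltac:(lra) ltac:(lra)).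
  pose proof (V (mu - 0) (mu - 0) ltac:(lra) ltac:(lra)).
  apply Rabs_le_between in P1, P2, P3. apply Rabs_le.
  assert ((l - mu) * ((l - 0) * ((l - 0) * M)) = (l - 0) * ((l - 0) * ((l - mu) * M))) by ring.
  assert ((mu - 0) * ((l - mu) * ((l - 0) * M)) = (mu - 0) * ((l - 0) * ((l - mu) * M))) by ring.
  split; lra.
Qed.

Lemma convex3_path_lipschitz p q w a b x y : affine01 p -> affine01 q -> affine01 w ->
  0 < a -> b < 1 -> a <= x -> x <= y -> y <= b ->
  Rabs (F (p y) (q y) (w y) - F (p x) (q x) (w x)) <= 2 * M * (/ a + / (1 - b)) * (y - x).
Proof.
  intros Hp Hq Hw. intros.
  apply (convex1_lipschitz (fun z => F (p z) (q z) (w z))); auto.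
  - apply convex1_comp_affine; auto.
  - intros z Hz. destruct Hp as [Ip _], Hq as [Iq _], Hw as [Iw _]. apply HM; auto.
Qed.

Lemma shell1_approx mu l d : 0 <= mu -> mu <= l -> l <= 1 -> 0 <= d ->
  (forall s t r, mu <= s <= l -> 0 <= t <= l -> 0 <= r <= l -> Rabs (F s t r - F l t r) <= d) ->
  Rabs (box3 F mu l 0 l 0 l - (l - mu) * box3 (fun _ t r => F l t r) 0 1 0 l 0 l) <= (l - mu) * d.
Proof.
  intros Hmu Hml Hl Hd0 Hd.
  rewrite <- box3_const1.
  eapply Rle_trans.
  { apply (box3_dist_le _ _ mu l 0 l 0 l d HF (convex3_face1 l ltac:(lra))); try lra.
    intros s t r Hs Ht Hr. apply Hd; lra. }
  pose proof (Rmult_unit_le (l - 0) d ltac:(lra) Hd0).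
  pose proof (Rmult_unit_le (l - 0) ((l - 0) * d) ltac:(lra) ltac:(lra)).
  apply Rmult_le_compat_l; lra.
Qed.

Lemma shell2_approx mu l d : 0 <= mu -> mu <= l -> l <= 1 -> 0 <= d ->
  (forall s t r, 0 <= s <= mu -> mu <= t <= l -> 0 <= r <= l -> Rabs (F s t r - F s l r) <= d) ->
  Rabs (box3 F 0 mu mu l 0 l - (l - mu) * box3 (fun s _ r => F s l r) 0 l 0 1 0 l)
    <= (l - mu) * (d + (l - mu) * M).
Proof.
  intros Hmu Hml Hl Hd0 Hd.
  assert (HM0 := cube_bound_nonneg).
  assert (HG := convex3_face2 l ltac:(lra)).
  assert (P1 : Rabs (box3 F 0 mu mu l 0 l - box3 (fun s _ r => F s l r) 0 mu mu l 0 l)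
    <= (mu - 0) * ((l - mu) * ((l - 0) * d))).
  { apply box3_dist_le; auto; lra. }
  assert (P2 : Rabs (box3 (fun s _ r => F s l r) mu l 0 1 0 l) <= (l - mu) * ((1 - 0) * ((l - 0) * M))).
  { apply box3_abs_le; auto; try lra. intros s t r Hs Ht Hr. apply HM; lra. }
  rewrite box3_const2 in P1 by (auto; lra).
  rewrite <- (box3_split1 _ HG 0 mu l 0 1 0 l) by lra.
  set (Y := box3 (fun s _ r => F s l r) mu l 0 1 0 l) in *.
  assert (B1 : (mu - 0) * ((l - mu) * ((l - 0) * d)) <= (l - mu) * d).
  { pose proof (Rmult_unit_le (l - 0) d ltac:(lra) Hd0).
    replace ((mu - 0) * ((l - mu) * ((l - 0) * d))) with ((l - mu) * ((mu - 0) * ((l - 0) * d))) by ring.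
    apply Rmult_le_compat_l; [lra|].
    pose proof (Rmult_unit_le (mu - 0) ((l - 0) * d) ltac:(lra) ltac:(lra)). lra. }
  assert (B2 : Rabs ((l - mu) * Y) <= (l - mu) * ((l - mu) * M)).
  { rewrite Rabs_mult, Rabs_right by lra. apply Rmult_le_compat_l; [lra|].
    pose proof (Rmult_unit_le (l - 0) M ltac:(lra) HM0). nra. }
  apply Rabs_le_between in P1, B2. apply Rabs_le. split; nra.
Qed.

Lemma shell3_approx mu l d : 0 <= mu -> mu <= l -> l <= 1 -> 0 <= d ->
  (forall s t r, 0 <= s <= mu -> 0 <= t <= mu -> mu <= r <= l -> Rabs (F s t r - F s t l) <= d) ->
  Rabs (box3 F 0 mu 0 mu mu l - (l - mu) * box3 (fun s t _ => F s t l) 0 l 0 l 0 1)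
    <= (l - mu) * (d + 2 * (l - mu) * M).
Proof.
  intros Hmu Hml Hl Hd0 Hd.
  assert (HM0 := cube_bound_nonneg).
  assert (HG := convex3_face3 l ltac:(lra)).
  assert (P1 : Rabs (box3 F 0 mu 0 mu mu l - box3 (fun s t _ => F s t l) 0 mu 0 mu mu l)
    <= (mu - 0) * ((mu - 0) * ((l - mu) * d))).
  { apply box3_dist_le; auto; lra. }
  assert (P2 : Rabs (box3 (fun s t _ => F s t l) mu l 0 l 0 1) <= (l - mu) * ((l - 0) * ((1 - 0) * M))).
  { apply box3_abs_le; auto; try lra. intros s t r Hs Ht Hr. apply HM; lra. }
  assert (P3 : Rabs (box3 (fun s t _ => F s t l) 0 mu mu l 0 1) <= (mu - 0) * ((l - mu) * ((1 - 0) * M))).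
  { apply box3_abs_le; auto; try lra. intros s t r Hs Ht Hr. apply HM; lra. }
  rewrite box3_const3 in P1 by (auto; lra).
  rewrite <- (box3_split1 _ HG 0 mu l 0 l 0 1), <- (box3_split2 _ HG 0 mu 0 mu l 0 1) by lra.
  set (Y := box3 (fun s t _ => F s t l) mu l 0 l 0 1) in *.
  set (Z := box3 (fun s t _ => F s t l) 0 mu mu l 0 1) in *.
  assert (B1 : (mu - 0) * ((mu - 0) * ((l - mu) * d)) <= (l - mu) * d).
  { replace ((mu - 0) * ((mu - 0) * ((l - mu) * d))) with ((l - mu) * ((mu - 0) * ((mu - 0) * d))) by ring.
    apply Rmult_le_compat_l; [lra|].
    pose proof (Rmult_unit_le (mu - 0) d ltac:(lra) Hd0).
    pose proof (Rmult_unit_le (mu - 0) ((mu - 0) * d) ltac:(lra) ltac:(lra)). lra. }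
  assert (B2 : Rabs ((l - mu) * (Y + Z)) <= (l - mu) * (2 * (l - mu) * M)).
  { rewrite Rabs_mult, Rabs_right by lra. apply Rmult_le_compat_l; [lra|].
    eapply Rle_trans; [apply Rabs_triang|].
    pose proof (Rmult_unit_le (l - 0) M ltac:(lra) HM0).
    pose proof (Rmult_unit_le (mu - 0) M ltac:(lra) HM0). nra. }
  apply Rabs_le_between in P1, B2. apply Rabs_le. split; nra.
Qed.

Lemma cube_int_left_deriv : uniform_left_deriv (cube_int F) (face_int F).
Proof.
  intros a b Ha Hb.
  assert (HM0 := cube_bound_nonneg).
  set (L := 2 * M * (/ a + / (1 - b))).
  assert (HL : 0 <= L).
  { assert (0 < / a) by (apply Rinv_0_lt_compat; lra).
    assert (0 < / (1 - b)) by (apply Rinv_0_lt_compat; lra).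
    unfold L. apply Rmult_le_pos; lra. }
  exists (3 * L + 3 * M). intros mu l Hmu Hml Hl.
  set (d := L * (l - mu)).
  assert (Hd : 0 <= d) by (apply Rmult_le_pos; lra).
  assert (Hlip : forall p q w x y, affine01 p -> affine01 q -> affine01 w -> mu <= x -> x <= y -> y <= l ->
    Rabs (F (p y) (q y) (w y) - F (p x) (q x) (w x)) <= d).
  { intros p q w x y Hp Hq Hw Hx Hxy Hy. eapply Rle_trans.
    - apply (convex3_path_lipschitz p q w a b x y); auto; lra.
    - apply Rmult_le_compat_l; lra. }
  rewrite cube_int_shell by lra. unfold face_int.
  assert (P1 := shell1_approx mu l d ltac:(lra) Hml ltac:(lra) Hd).
  assert (P2 := shell2_approx mu l d ltac:(lra) Hml ltac:(lra) Hd).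
  assert (P3 := shell3_approx mu l d ltac:(lra) Hml ltac:(lra) Hd).
  specialize (P1 ltac:(intros s t r Hs Ht Hr; rewrite Rabs_minus_sym;
    apply (Hlip (fun z => z) (fun _ => t) (fun _ => r) s l);
    first [apply affine01_id | apply affine01_const | idtac]; lra)).
  specialize (P2 ltac:(intros s t r Hs Ht Hr; rewrite Rabs_minus_sym;
    apply (Hlip (fun _ => s) (fun z => z) (fun _ => r) t l);
    first [apply affine01_id | apply affine01_const | idtac]; lra)).
  specialize (P3 ltac:(intros s t r Hs Ht Hr; rewrite Rabs_minus_sym;
    apply (Hlip (fun _ => s) (fun _ => t) (fun z => z) r l);
    first [apply affine01_id | apply affine01_const | idtac]; lra)).
  apply Rabs_le_between in P1, P2, P3. apply Rabs_le.
  replace ((3 * L + 3 * M) * (l - mu) ^ 2) with ((l - mu) * (3 * d + 3 * (l - mu) * M)) by (unfold d; ring).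
  split; nra.
Qed.

Lemma cube_int_le_of_face_avg_le al be :
  (forall l, 0 < l < 1 -> face_avg F l <= al + be * l) -> cube_int F 1 <= al + 3 / 4 * be.
Proof.
  intros H.
  pose proof (increment_le_of_left_deriv_le _ _ _ _ _ _ cube_int_lipschitz
    (cubic_quartic_lipschitz al (3 / 4 * be)) cube_int_left_deriv (cubic_quartic_left_deriv al (3 / 4 * be))) as Hc.
  rewrite cube_int_0 in Hc. unfold cubic_quartic in Hc.
  enough (cube_int F 1 - 0 <= al * 1 ^ 3 + 3 / 4 * be * 1 ^ 4 - (al * 0 ^ 3 + 3 / 4 * be * 0 ^ 4)) by lra.
  apply Hc. intros l Hl. rewrite face_int_scale by lra.
  specialize (H l Hl). assert (0 <= l ^ 2) by apply pow2_ge_0. simpl in *. nra.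
Qed.

Lemma cube_int_ge_of_face_avg_ge al be :
  (forall l, 0 < l < 1 -> al + be * l <= face_avg F l) -> al + 3 / 4 * be <= cube_int F 1.
Proof.
  intros H.
  pose proof (increment_le_of_left_deriv_le _ _ _ _ _ _ (cubic_quartic_lipschitz al (3 / 4 * be))
    cube_int_lipschitz (cubic_quartic_left_deriv al (3 / 4 * be)) cube_int_left_deriv) as Hc.
  rewrite cube_int_0 in Hc. unfold cubic_quartic in Hc.
  enough (al * 1 ^ 3 + 3 / 4 * be * 1 ^ 4 - (al * 0 ^ 3 + 3 / 4 * be * 0 ^ 4) <= cube_int F 1 - 0) by lra.
  apply Hc. intros l Hl. rewrite face_int_scale by lra.
  specialize (H l Hl). assert (0 <= l ^ 2) by apply pow2_ge_0. simpl in *. nra.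
Qed.

End CubeIntegral.

Lemma convex3_bounded F : convex3 F ->
  exists M, forall s t r, 0 <= s <= 1 -> 0 <= t <= 1 -> 0 <= r <= 1 -> Rabs (F s t r) <= M.
Proof.
  intros HF.
  set (B := Rabs (F 0 0 0) + Rabs (F 0 0 1) + Rabs (F 0 1 0) + Rabs (F 0 1 1)
          + Rabs (F 1 0 0) + Rabs (F 1 0 1) + Rabs (F 1 1 0) + Rabs (F 1 1 1)).
  assert (Hvert : forall s t r, (s = 0 \/ s = 1) -> (t = 0 \/ t = 1) -> (r = 0 \/ r = 1) -> F s t r <= B).
  { intros s t r Hs Ht Hr. unfold B.
    pose proof (Rabs_pos (F 0 0 0)). pose proof (Rabs_pos (F 0 0 1)). pose proof (Rabs_pos (F 0 1 0)).
    pose proof (Rabs_pos (F 0 1 1)). pose proof (Rabs_pos (F 1 0 0)). pose proof (Rabs_pos (F 1 0 1)).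
    pose proof (Rabs_pos (F 1 1 0)). pose proof (Rabs_pos (F 1 1 1)).
    destruct Hs as [->| ->], Ht as [->| ->], Hr as [->| ->];
      match goal with |- F ?x ?y ?z <= _ => pose proof (Rle_abs (F x y z)) end; lra. }
  assert (Hedge : forall s t r, (s = 0 \/ s = 1) -> (t = 0 \/ t = 1) -> 0 <= r <= 1 -> F s t r <= B).
  { intros s t r Hs Ht Hr.
    apply (convex1_le_endpoints (fun x => F s t x)); auto using Hvert.
    apply (convex1_comp_affine F (fun _ => s) (fun _ => t) (fun x => x));
      [exact HF|apply affine01_const; lra|apply affine01_const; lra|apply affine01_id]. }
  assert (Hface : forall s t r, (s = 0 \/ s = 1) -> 0 <= t <= 1 -> 0 <= r <= 1 -> F s t r <= B).
  { intros s t r Hs Ht Hr.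
    apply (convex1_le_endpoints (fun x => F s x r)); auto using Hedge.
    apply (convex1_comp_affine F (fun _ => s) (fun x => x) (fun _ => r));
      [exact HF|apply affine01_const; lra|apply affine01_id|apply affine01_const; lra]. }
  assert (Hup : forall s t r, 0 <= s <= 1 -> 0 <= t <= 1 -> 0 <= r <= 1 -> F s t r <= B).
  { intros s t r Hs Ht Hr.
    apply (convex1_le_endpoints (fun x => F x t r)); auto using Hface.
    apply (convex1_comp_affine F (fun x => x) (fun _ => t) (fun _ => r));
      [exact HF|apply affine01_id|apply affine01_const; lra|apply affine01_const; lra]. }
  exists (B + 2 * Rabs (F (/ 2) (/ 2) (/ 2))).
  intros s t r Hs Ht Hr. apply Rabs_le.
  (* the centre is the midpoint of (s, t, r) and its mirror image *)
  pose proof (HF s t r (1 - s) (1 - t) (1 - r) (/ 2) Hs Ht Hr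
    ltac:(lra) ltac:(lra) ltac:(lra) ltac:(lra)) as Hmid.
  replace (/ 2 * s + (1 - / 2) * (1 - s)) with (/ 2) in Hmid by field.
  replace (/ 2 * t + (1 - / 2) * (1 - t)) with (/ 2) in Hmid by field.
  replace (/ 2 * r + (1 - / 2) * (1 - r)) with (/ 2) in Hmid by field.
  pose proof (Hup s t r Hs Ht Hr). pose proof (Hup (1 - s) (1 - t) (1 - r) ltac:(lra) ltac:(lra) ltac:(lra)).
  pose proof (Rabs_pos (F (/ 2) (/ 2) (/ 2))). pose proof (Rle_abs (- F (/ 2) (/ 2) (/ 2))).
  rewrite Rabs_Ropp in *. split; lra.
Qed.

Lemma face_avg_0 F : face_avg F 0 = F 0 0 0.
Proof.
  unfold face_avg.
  rewrite !(box3_unit_const _ (F 0 0 0)) by (intros; rewrite !Rmult_0_l; reflexivity).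
  field.
Qed.

Lemma face_avg_convex F : convex3 F -> convex1 (face_avg F).
Proof.
  intros HF.
  assert (C1 : convex1 (fun l => box3 (fun _ t r => F l (l * t) (l * r)) 0 1 0 1 0 1)).
  { apply (convex1_box3_param (fun l _ t r => F l (l * t) (l * r))).
    - intros l Hl. apply (convex3_comp_affine F (fun _ => l) (fun t => l * t) (fun r => l * r));
        auto using affine01_const, affine01_scale.
    - intros s t r Hs Ht Hr. apply (convex1_comp_affine F (fun l => l) (fun l => l * t) (fun l => l * r));
        auto using affine01_id, affine01_scaler. }
  assert (C2 : convex1 (fun l => box3 (fun s _ r => F (l * s) l (l * r)) 0 1 0 1 0 1)).
  { apply (convex1_box3_param (fun l s _ r => F (l * s) l (l * r))).
    - intros l Hl. apply (convex3_comp_affine F (fun s => l * s) (fun _ => l) (fun r => l * r));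
        auto using affine01_const, affine01_scale.
    - intros s t r Hs Ht Hr. apply (convex1_comp_affine F (fun l => l * s) (fun l => l) (fun l => l * r));
        auto using affine01_id, affine01_scaler. }
  assert (C3 : convex1 (fun l => box3 (fun s t _ => F (l * s) (l * t) l) 0 1 0 1 0 1)).
  { apply (convex1_box3_param (fun l s t _ => F (l * s) (l * t) l)).
    - intros l Hl. apply (convex3_comp_affine F (fun s => l * s) (fun t => l * t) (fun _ => l));
        auto using affine01_const, affine01_scale.
    - intros s t r Hs Ht Hr. apply (convex1_comp_affine F (fun l => l * s) (fun l => l * t) (fun l => l));
        auto using affine01_id, affine01_scaler. }
  intros x y l Hx Hy Hl. unfold face_avg.
  pose proof (C1 x y l Hx Hy Hl). pose proof (C2 x y l Hx Hy Hl). pose proof (C3 x y l Hx Hy Hl).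
  simpl in *. lra.
Qed.

Theorem convex3_cube_bounds F : convex3 F ->
  cube_int F 1 <= / 4 * F 0 0 0 + 3 / 4 * face_avg F 1 /\ face_avg F (3 / 4) <= cube_int F 1.
Proof.
  intros HF. destruct (convex3_bounded F HF) as [M HM].
  pose proof (face_avg_convex F HF) as HS. split.
  - replace (/ 4 * F 0 0 0 + 3 / 4 * face_avg F 1)
      with (F 0 0 0 + 3 / 4 * (face_avg F 1 - F 0 0 0)) by field.
    apply (cube_int_le_of_face_avg_le F M HF HM). intros l Hl.
    pose proof (HS 1 0 l ltac:(lra) ltac:(lra) ltac:(lra)) as H.
    replace (l * 1 + (1 - l) * 0) with l in H by ring. rewrite face_avg_0 in H. lra.
  - destruct (convex1_subgradient _ HS (3 / 4) ltac:(lra)) as [m Hm].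
    replace (face_avg F (3 / 4)) with (face_avg F (3 / 4) - 3 / 4 * m + 3 / 4 * m) by ring.
    apply (cube_int_ge_of_face_avg_ge F M HF HM). intros l Hl.
    specialize (Hm l ltac:(lra)). lra.
Qed.

(** * Back to the cube in space *)

Lemma cube_pt_convex_comb A a u v w s1 t1 r1 s2 t2 r2 l :
  cube_pt A a u v w (l * s1 + (1 - l) * s2) (l * t1 + (1 - l) * t2) (l * r1 + (1 - l) * r2) =
  padd (pscal l (cube_pt A a u v w s1 t1 r1)) (pscal (1 - l) (cube_pt A a u v w s2 t2 r2)).
Proof. destruct A, u, v, w. unfold cube_pt, padd, pscal. simpl. f_equal; ring. Qed.

Lemma homothety_cube_pt A a u v w l s t r :
  homothety A l (cube_pt A a u v w s t r) = cube_pt A a u v w (l * s) (l * t) (l * r).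
Proof. destruct A, u, v, w. unfold homothety, cube_pt, padd, pscal, psub. simpl. f_equal; ring. Qed.

Lemma cube_pt_origin A a u v w : cube_pt A a u v w 0 0 0 = A.
Proof. destruct A, u, v, w. unfold cube_pt, padd, pscal. simpl. f_equal; ring. Qed.

Lemma homothety_1 A x : homothety A 1 x = x.
Proof. destruct A, x. unfold homothety, padd, pscal, psub. simpl. f_equal; ring. Qed.

Lemma convex3_cube_param A a u v w f : convex_on_cube A a u v w f ->
  convex3 (fun s t r => f (cube_pt A a u v w s t r)).
Proof.
  intros Hf s1 t1 r1 s2 t2 r2 l Hs1 Ht1 Hr1 Hs2 Ht2 Hr2 Hl.
  rewrite cube_pt_convex_comb. apply Hf; auto.
  - exists s1, t1, r1. auto.
  - exists s2, t2, r2. auto.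
Qed.

Lemma face_avg_RInt F l : face_avg F l =
  / 3 * (RInt (fun t => RInt (fun r => F l (l * t) (l * r)) 0 1) 0 1
       + RInt (fun s => RInt (fun r => F (l * s) l (l * r)) 0 1) 0 1
       + RInt (fun s => RInt (fun t => F (l * s) (l * t) l) 0 1) 0 1).
Proof.
  unfold face_avg, box3. rewrite RInt_const_R.
  rewrite (RInt_ext_R (fun s => RInt (fun _ => RInt (fun r => F (l * s) l (l * r)) 0 1) 0 1)
    (fun s => RInt (fun r => F (l * s) l (l * r)) 0 1)) by (try lra; intros; rewrite RInt_const_R; ring).
  rewrite (RInt_ext_R (fun s => RInt (fun t => RInt (fun _ => F (l * s) (l * t) l) 0 1) 0 1)
    (fun s => RInt (fun t => F (l * s) (l * t) l) 0 1)).
  - ring.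
  - lra.
  - intros s _. apply RInt_ext_R; [lra|]. intros t _. rewrite RInt_const_R. ring.
Qed.

Lemma avg_hS_face_avg A a u v w l f :
  avg_hS A a u v w l f = face_avg (fun s t r => f (cube_pt A a u v w s t r)) l.
Proof.
  rewrite face_avg_RInt. unfold avg_hS, avg_S.
  f_equal; f_equal; [f_equal|]; apply RInt_ext_R; try lra; intros x _;
    apply RInt_ext_R; try lra; intros y _; rewrite homothety_cube_pt, Rmult_1_r; reflexivity.
Qed.

Lemma avg_S_face_avg A a u v w f :
  avg_S A a u v w f = face_avg (fun s t r => f (cube_pt A a u v w s t r)) 1.
Proof.
  rewrite <- avg_hS_face_avg. unfold avg_hS.
  replace (fun x => f (homothety A 1 x)) with f; [reflexivity|].
  apply functional_extensionality. intros x. rewrite homothety_1. reflexivity.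
Qed.

(* Only convexity in the cube coordinates is used: the averages are defined
   through the parametrization. *)
Theorem theorem8p4 (A : pt3) (a : R) (u v w : pt3) (f : pt3 -> R) :
  0 < a -> orthonormal u v w -> convex_on_cube A a u v w f ->
  avg_cube A a u v w f <= / 4 * f A + 3 / 4 * avg_S A a u v w f /\
  avg_hS A a u v w (3 / 4) f <= avg_cube A a u v w f.
Proof.
  intros _ _ Hf.
  destruct (convex3_cube_bounds _ (convex3_cube_param A a u v w f Hf)) as [Hup Hlo].
  rewrite cube_pt_origin, <- avg_S_face_avg in Hup.
  rewrite <- avg_hS_face_avg in Hlo.
  exact (conj Hup Hlo).
Qed.
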